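(* Let $(\mathcal G,\alpha)$ be a matching model such that $\alpha$ satisfies the stability condition $|\alpha_{\mathcal I}|<|\alpha_{\mathcal E(\mathcal I)}|$ for all $\mathcal I\in\mathbb I$. Then the stationary mean number of items under FCFS equals $$\mathbb E[Q]=\Big(1+\sum_{\mathcal I\in\mathbb I}T_{\mathcal I}\Big)^{-1}\Big(\sum_{\mathcal I\in\mathbb I}E_{\mathcal I}\Big).$$
   Context: A matching model consists of a finite connected simple graph $\mathcal G=(\mathcal V,\xi)$ (the compatibility graph), $\mathcal V=\{1,\dots,n\}$, and a probability distribution $\alpha=(\alpha_1,\dots,\alpha_n)$ on $\mathcal V$ with all $\alpha_i>0$. In each time step an item of class $i$ arrives with probability proportional to $\alpha_i$. For $i\in\mathcal V$ let $\mathcal E(i)$ be the set of neighbours of $i$; for $V\subseteq\mathcal V$ let $\mathcal E(V)=\bigcup_{i\in V}\mathcal E(i)$ and $|\alpha_V|=\sum_{i\in V}\alpha_i$. The state is a finite word $w=w_1\cdots w_q$ over $\mathcal V$ with no two letters adjacent in $\mathcal G$ (unmatched items in order of arrival). Under FCFS, if an item of class $i$ arrives in state $w$ and some letter of $w$ lies in $\mathcal E(i)$, the first such letter is deleted; otherwise $i$ is appended. An independent set is a non-empty subset of $\mathcal V$ with no two elements adjacent; $\mathbb I$ is the set of independent sets. Under the stability condition the chain is positive recurrent with stationary distribution $\pi(w)=\pi_0\prod_{i=1}^q\alpha_{w_i}/|\alpha_{\mathcal E(\{w_1,\dots,w_i\})}|$, and $\mathbb E[Q]=\sum_w |w|\pi(w)$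 where $|w|$ is the length of $w$. For $\mathcal I\in\mathbb I$ and an ordering $(i_1,\dots,i_m)$ of its elements ($m=|\mathcal I|$), write $\mathcal I_k=\{i_1,\dots,i_k\}$ and $$T_{(i_1,\dots,i_m)}=\prod_{k=1}^m\frac{\alpha_{i_k}}{|\alpha_{\mathcal E(\mathcal I_k)}|-|\alpha_{\mathcal I_k}|},\qquad E_{(i_1,\dots,i_m)}=\sum_{l=1}^m\frac{|\alpha_{\mathcal E(\mathcal I_l)}|}{|\alpha_{\mathcal E(\mathcal I_l)}|-|\alpha_{\mathcal I_l}|}\,T_{(i_1,\dots,i_m)}.$$ $T_{\mathcal I}$ (resp. $E_{\mathcal I}$) is the sum of $T_{(i_1,\dots,i_m)}$ (resp. $E_{(i_1,\dots,i_m)}$) over all $m!$ orderings of $\mathcal I$. *)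

From HB Require Import structures.
From mathcomp Require Import all_boot all_order all_algebra.
From mathcomp Require Import boolp classical_sets reals topology normedtype sequences.
Set Implicit Arguments. Unset Strict Implicit. Unset Printing Implicit Defensive.
Import Order.TTheory GRing.Theory Num.Theory.
Local Open Scope ring_scope.

Section MatchingModel.
Variables (R : realType) (V : finType) (e : rel V) (alpha : V -> R).

Definition nbhd (S : {set V}) : {set V} := [set j | [exists i in S, e i j]].

Definition asum (S : {set V}) : R := \sum_(j in S) alpha j.

Definition indep (S : {set V}) : bool :=
  (S != finset.set0) && [forall i in S, forall j in S, ~~ e i j].

(* admissible state: a word with no two letters adjacent *)
Definition word_ok (s : seq V) : bool :=
  all (fun x => all (fun y => ~~ e x y) s) s.

(* unnormalised stationary weight prod_{i} alpha_{w_i} / |alpha_{E({w_1..w_i})}| *)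
Definition phi (q : nat) (w : q.-tuple V) : R :=
  \prod_(i < q) (alpha (tnth w i) / asum (nbhd [set x in take i.+1 w])).

Definition wsum (q : nat) : R :=
  \sum_(w : q.-tuple V | word_ok w) phi w.

(* prefix I_{k+1} = {i_1,...,i_{k+1}} of an ordering t (0-indexed k) *)
Definition pref (m : nat) (t : m.-tuple V) (k : nat) : {set V} :=
  [set x in take k.+1 t].

Definition Tord (m : nat) (t : m.-tuple V) : R :=
  \prod_(k < m) (alpha (tnth t k) /
                 (asum (nbhd (pref t k)) - asum (pref t k))).

Definition Eord (m : nat) (t : m.-tuple V) : R :=
  (\sum_(l < m) (asum (nbhd (pref t l)) /
                 (asum (nbhd (pref t l)) - asum (pref t l)))) * Tord t.

Definition TI (I : {set V}) : R :=
  \sum_(t : #|I|.-tuple V | perm_eq t (enum I)) Tord t.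

Definition EI (I : {set V}) : R :=
  \sum_(t : #|I|.-tuple V | perm_eq t (enum I)) Eord t.

End MatchingModel.

From HB Require Import structures.
From mathcomp Require Import boolp classical_sets reals topology normedtype sequences.
From mathcomp Require Import all_boot all_order all_algebra.
From mathcomp Require Import ring lra zify.
Set Implicit Arguments. Unset Strict Implicit. Unset Printing Implicit Defensive.
Import Order.TTheory GRing.Theory Num.Theory.
Import numFieldTopology.Exports numFieldNormedType.Exports.
Local Open Scope classical_set_scope.
Local Open Scope ring_scope.

(* The stationary weight of an admissible word multiplies, letter by letter,
   alpha_x / |alpha_E(P)| where P is the set of letters read so far.  We therefore
   study words continuing a state whose letters form an edgeless set A:
   cont_wt A q is the total weight of the admissible continuations of length q.
   Splitting on the first letter x gives the exact recursion
     cont_wt A (q+1) = rho_A cont_wt A q + sum_(x addable to A) wfac x (A+x) cont_wt (A+x) q,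
   where rho_A = |alpha_A| / |alpha_E(A)| accounts for letters already in A;
   stability gives rho_A < 1.  The generating sums over orderings of the new
   letters, Tall A and Eall A, obey the matching first-letter recursions.

   By induction on |V \ A| this yields
     sum_q cont_wt A q = Tall A / (1 - rho_A) =: Zlim A,
     sum_q q cont_wt A q = (Eall A + rho_A Zlim A) / (1 - rho_A) =: Slim A.
   At A = set0 we have rho = 0, Tall = 1 + sum_I T_I and Eall = sum_I E_I,
   which is the theorem. *)

Section Words.
Variables (R : realType) (V : finType) (e : rel V) (alpha : V -> R).
Implicit Types (A B : {set V}) (s : seq V).
Local Notation asm := (asum alpha).
Local Notation nb := (nbhd e).

(* No two elements of A are compatible; indep e A is "nonempty and edgeless". *)
Definition edgeless A := [forall i in A, forall j in A, ~~ e i j].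

Lemma edgeless_sub A B : A \subset B -> edgeless B -> edgeless A.
Proof.
move=> sAB /forall_inP eB; apply/forall_inP=> i iA; apply/forall_inP=> j jA.
by move/forall_inP: (eB i (subsetP sAB i iA)); apply; apply: (subsetP sAB).
Qed.

Lemma setU1_neq0 x A : x |: A != set0.
Proof. by apply/set0Pn; exists x; rewrite setU11. Qed.

Lemma setU1_id x A : x \in A -> x |: A = A.
Proof. by move=> xA; apply/setUidPr; rewrite sub1set. Qed.

Lemma edgeless0 : edgeless set0.
Proof. by apply/forall_inP => i; rewrite inE. Qed.

Lemma word_okE s : word_ok e s = edgeless [set:: s].
Proof.
apply/allP/forall_inP => [ok i|eB i si].
  rewrite inE => si; apply/forall_inP => j; rewrite inE => sj.
  exact: (allP (ok i si) j sj).
apply/allP => j sj.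
by have := eB i; rewrite inE => /(_ si) /forall_inP; apply; rewrite inE.
Qed.

Lemma big_pref_cons (idx : R) (op : Monoid.law idx) (F : V -> {set V} -> R)
    A x m (t : m.-tuple V) :
  \big[op/idx]_(k < m.+1) F (tnth (cons_tuple x t) k) (A :|: pref (cons_tuple x t) k) =
  op (F x (x |: A)) (\big[op/idx]_(k < m) F (tnth t k) ((x |: A) :|: pref t k)).
Proof.
rewrite big_ord_recl tnth0; congr (op (F x _) _).
  by apply/setP => y; rewrite /pref /= take0 !inE orbC.
apply: eq_bigr => k _; rewrite tnthS; congr (F _ _).
by apply/setP => y; rewrite /pref /= !inE orbA (orbC (y \in A)).
Qed.

(* Factors attached to a letter x whose arrival makes the letter set B:
   wfac for the stationary weight, tfac and efac for T and E. *)
Definition wfac x B := alpha x / asm (nb B).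
Definition tfac x B := alpha x / (asm (nb B) - asm B).
Definition efac B := asm (nb B) / (asm (nb B) - asm B).

Definition word_wt A m (t : m.-tuple V) :=
  \prod_(k < m) wfac (tnth t k) (A :|: pref t k).
Definition ordT A m (t : m.-tuple V) :=
  \prod_(k < m) tfac (tnth t k) (A :|: pref t k).
Definition ordS A m (t : m.-tuple V) := \sum_(k < m) efac (A :|: pref t k).

Lemma word_wt_cons A x m (t : m.-tuple V) :
  word_wt A (cons_tuple x t) = wfac x (x |: A) * word_wt (x |: A) t.
Proof. exact: (big_pref_cons _ wfac). Qed.

Lemma ordT_cons A x m (t : m.-tuple V) :
  ordT A (cons_tuple x t) = tfac x (x |: A) * ordT (x |: A) t.
Proof. exact: (big_pref_cons _ tfac). Qed.

Lemma ordS_cons A x m (t : m.-tuple V) :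
  ordS A (cons_tuple x t) = efac (x |: A) + ordS (x |: A) t.
Proof. exact: (big_pref_cons _ (fun=> efac)). Qed.

Lemma big_tuple_cons q (P : pred (q.+1.-tuple V)) (F : q.+1.-tuple V -> R) :
  \sum_(w | P w) F w =
  \sum_(x : V) \sum_(w : q.-tuple V | P (cons_tuple x w)) F (cons_tuple x w).
Proof.
rewrite big_mkcond; under [RHS]eq_bigr do rewrite big_mkcond.
rewrite pair_big (reindex (fun p : V * q.-tuple V => cons_tuple p.1 p.2)) //=.
exists (fun w : q.+1.-tuple V => (thead w, behead_tuple w)) => [[x w] _|w _].
  by rewrite theadE; congr (_, _); apply: val_inj.
by case/tupleP: w => x w; apply: val_inj; rewrite /= theadE.
Qed.

Definition cont_wt A q :=
  \sum_(w : q.-tuple V | edgeless (A :|: [set:: w])) word_wt A w.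

Lemma cont_wt0 A : edgeless A -> cont_wt A 0 = 1.
Proof.
move=> eA; rewrite /cont_wt (big_pred1 [tuple]); first exact: big_ord0.
by move=> w; rewrite [w]tuple0 /= set_nil setU0 eA; apply/esym/eqP.
Qed.

Lemma cont_wtS A q :
  cont_wt A q.+1 = \sum_(x | edgeless (x |: A)) wfac x (x |: A) * cont_wt (x |: A) q.
Proof.
rewrite /cont_wt big_tuple_cons [RHS]big_mkcond; apply: eq_bigr => x _ /=.
under eq_big => [w|w _] do [rewrite set_cons setUA (setUC A) | rewrite word_wt_cons].
case: ifP => eA; first by rewrite mulr_sumr.
apply: big1 => w /(edgeless_sub (subsetUl _ _)); by rewrite eA.
Qed.

Lemma wsum_cont_wt q : wsum e alpha q = cont_wt set0 q.
Proof.
apply: eq_big => [w|w _]; first by rewrite word_okE set0U.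
by apply: eq_bigr => k _; rewrite set0U.
Qed.

Definition fresh A s := [&& uniq s, all [predC A] s & edgeless (A :|: [set:: s])].

Definition addable A x := (x \notin A) && edgeless (x |: A).

Lemma fresh_nil A : fresh A [::] = edgeless A.
Proof. by rewrite /fresh /= set_nil setU0. Qed.

Lemma fresh_cons A x s : fresh A (x :: s) = addable A x && fresh (x |: A) s.
Proof.
rewrite /fresh /addable /= set_cons setUA (setUC A).
have -> : all [predC x |: A] s = (x \notin s) && all [predC A] s.
  by rewrite -has_pred1 -all_predC -all_predI; apply: eq_all => y; rewrite !inE negb_or.
case eB: (edgeless _); last by rewrite !andbF.
rewrite (edgeless_sub (subsetUl _ _) eB).
by case: (x \in s); case: (x \in A); case: (uniq s); case: (all _ s).
Qed.

Lemma fresh_size A s : fresh A s -> (size s <= #|~: A|)%N.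
Proof.
case/and3P=> us sA _; rewrite -(card_uniqP us); apply: subset_leq_card.
by apply/subsetP => y ys; rewrite inE; exact: (allP sA).
Qed.

Lemma fresh_none A m (t : m.-tuple V) : (#|~: A| < m)%N -> ~~ fresh A t.
Proof. by move=> lt; apply/negP => /fresh_size; rewrite size_tuple leqNgt lt. Qed.

Lemma sum_fresh_cons A m (G : m.+1.-tuple V -> R) :
  \sum_(t : m.+1.-tuple V | fresh A t) G t =
  \sum_(x | addable A x)
     \sum_(t : m.-tuple V | fresh (x |: A) t) G (cons_tuple x t).
Proof.
rewrite big_tuple_cons [RHS]big_mkcond; apply: eq_bigr => x _ /=.
under eq_bigl => t do rewrite fresh_cons andbA.
by case: ifP => // _; apply: big_pred0.
Qed.

Definition Tlen A m := \sum_(t : m.-tuple V | fresh A t) ordT A t.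
Definition Elen A m := \sum_(t : m.-tuple V | fresh A t) ordS A t * ordT A t.

Lemma Tlen0 A : edgeless A -> Tlen A 0 = 1.
Proof.
move=> eA; rewrite /Tlen (big_pred1 [tuple]); first exact: big_ord0.
by move=> t; rewrite [t]tuple0 fresh_nil eA; apply/esym/eqP.
Qed.

Lemma Elen0 A : Elen A 0 = 0.
Proof. by apply: big1 => t _; rewrite /ordS big_ord0 mul0r. Qed.

Lemma TlenS A m :
  Tlen A m.+1 = \sum_(x | addable A x)
                  tfac x (x |: A) * Tlen (x |: A) m.
Proof.
rewrite /Tlen sum_fresh_cons; apply: eq_bigr => x _.
by rewrite mulr_sumr; apply: eq_bigr => t _; rewrite ordT_cons.
Qed.

Lemma ElenS A m :
  Elen A m.+1 = \sum_(x | addable A x)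
     tfac x (x |: A) * (efac (x |: A) * Tlen (x |: A) m + Elen (x |: A) m).
Proof.
rewrite /Elen sum_fresh_cons; apply: eq_bigr => x _.
rewrite /Tlen mulr_sumr -big_split mulr_sumr; apply: eq_bigr => t _ /=.
by rewrite ordS_cons ordT_cons; ring.
Qed.

Lemma Tlen_big A m : (#|~: A| < m)%N -> Tlen A m = 0.
Proof. by move=> lt; apply: big_pred0 => t; apply/negbTE/fresh_none. Qed.

Lemma Elen_big A m : (#|~: A| < m)%N -> Elen A m = 0.
Proof. by move=> lt; apply: big_pred0 => t; apply/negbTE/fresh_none. Qed.

(* Sums over fresh orderings of every length; #|V| bounds the lengths. *)
Definition Tall A := \sum_(m < #|V|.+1) Tlen A m.
Definition Eall A := \sum_(m < #|V|.+1) Elen A m.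

Lemma sum_upto_card B (G : nat -> R) : B != set0 ->
  (forall m, (#|~: B| < m)%N -> G m = 0) ->
  \sum_(m < #|V|) G m = \sum_(m < #|V|.+1) G m.
Proof.
move=> B0 G0; rewrite big_ord_recr /= G0 ?addr0 //.
by rewrite -(cardsC B) -[X in (X < _)%N]add0n ltn_add2r card_gt0.
Qed.

Lemma TallS A : edgeless A ->
  Tall A = 1 + \sum_(x | addable A x) tfac x (x |: A) * Tall (x |: A).
Proof.
move=> eA; rewrite /Tall big_ord_recl Tlen0 //; congr (_ + _).
under eq_bigr => m _ do rewrite lift0 TlenS.
rewrite exchange_big /=; apply: eq_bigr => x _; rewrite -mulr_sumr.
by rewrite (sum_upto_card (setU1_neq0 x A) (@Tlen_big _)).
Qed.

Lemma EallS A :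
  Eall A = \sum_(x | addable A x)
              tfac x (x |: A) * (efac (x |: A) * Tall (x |: A) + Eall (x |: A)).
Proof.
rewrite /Eall big_ord_recl Elen0 add0r.
under eq_bigr => m _ do rewrite lift0 ElenS.
rewrite exchange_big /=; apply: eq_bigr => x _; rewrite -mulr_sumr; congr (_ * _).
rewrite /Tall /Eall mulr_sumr -big_split.
set G := fun m => efac (x |: A) * Tlen (x |: A) m + Elen (x |: A) m.
apply: (sum_upto_card (G := G) (setU1_neq0 x A)) => m lt.
by rewrite /G Tlen_big // Elen_big // mulr0 addr0.
Qed.

Lemma sum_orderings_by_size I (G : forall n, n.-tuple V -> R) : I != set0 ->
  \sum_(t : #|I|.-tuple V | perm_eq t (enum I)) G _ t =
  \sum_(m < #|V|) \sum_(t : m.+1.-tuple V | (m.+1 == #|I|) && perm_eq t (enum I)) G _ t.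
Proof.
rewrite -card_gt0 => I0.
pose H n := \sum_(t : n.-tuple V | perm_eq t (enum I)) G n t.
transitivity (\sum_(m < #|V|) if m.+1 == #|I| then H m.+1 else 0); last first.
  by apply: eq_bigr => m _; case: eqP => //= _; rewrite big_pred0_eq.
rewrite -big_mkcond (eq_bigl (fun m : 'I_#|V| => (m : nat) == #|I|.-1)); last first.
  by move=> m /=; apply/eqP/eqP => [<-|->] //; rewrite prednK.
rewrite (big_ord1_eq _ (fun j => H j.+1)) ifT; first by rewrite prednK.
by rewrite prednK //; exact: max_card.
Qed.

Lemma sum_indep_orderings (G : forall n, n.-tuple V -> R) :
  \sum_(I : {set V} | indep e I) \sum_(t : #|I|.-tuple V | perm_eq t (enum I)) G _ t =
  \sum_(m < #|V|) \sum_(t : m.+1.-tuple V | fresh set0 t) G _ t.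
Proof.
under eq_bigr => I /andP[I0 _] do rewrite sum_orderings_by_size //.
rewrite exchange_big /=; apply: eq_bigr => m _.
rewrite (exchange_big_dep (fun t : m.+1.-tuple V => fresh set0 t)) /=; last first.
  move=> I t /andP[_ eI] /andP[_ pt]; rewrite /fresh set0U (perm_uniq pt) enum_uniq.
  have -> : [set:: t] = I by apply/setP => y; rewrite inE (perm_mem pt) mem_enum.
  by rewrite (eI : edgeless I) andbT; apply/allP => y; rewrite !inE.
apply: eq_bigr => t /and3P[ut _]; rewrite set0U => et.
rewrite (big_pred1 [set:: t]) // => I /=; apply/idP/eqP.
  by case/and3P=> _ _ pt; apply/setP => y; rewrite inE (perm_mem pt) mem_enum.
move=> ->; apply/and3P; split.
- apply/andP; split; last exact: et.
  by apply/set0Pn; exists (tnth t ord0); rewrite inE mem_tnth.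
- by rewrite cardsE (card_uniqP ut) size_tuple.
- by apply: uniq_perm ut (enum_uniq _) _ => y; rewrite mem_enum inE.
Qed.

Lemma Tall0 : Tall set0 = 1 + \sum_(I | indep e I) TI e alpha I.
Proof.
rewrite /Tall big_ord_recl Tlen0 ?edgeless0 //; congr (_ + _).
rewrite /TI (sum_indep_orderings (fun m t => Tord e alpha t)).
apply: eq_bigr => m _; apply: eq_bigr => t _.
by apply: eq_bigr => k _; rewrite set0U.
Qed.

Lemma Eall0 : Eall set0 = \sum_(I | indep e I) EI e alpha I.
Proof.
rewrite /Eall big_ord_recl Elen0 add0r.
rewrite /EI (sum_indep_orderings (fun m t => Eord e alpha t)).
apply: eq_bigr => m _; apply: eq_bigr => t _.
by congr (_ * _); apply: eq_bigr => k _; rewrite set0U.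
Qed.

End Words.

Section Limits.
Variable R : realType.

(* Limit of a monotone sequence driven by an affine contraction: P is bounded
   since K is, hence converges, and its limit l satisfies l = k + rho l. *)
Lemma cvg_affine_rec (P K : R ^nat) (k rho : R) :
  nondecreasing_seq P -> P 0%N = 0 -> (forall N, P N.+1 = K N + rho * P N) ->
  K @ \oo --> k -> 0 <= rho -> rho < 1 -> P @ \oo --> k / (1 - rho).
Proof.
move=> ndP P0 PS Kk r0 r1.
have [M M0 KM] := ex_strict_bound_gt0 (cvg_seq_bounded (cvgP _ Kk)).
have PM N : P N <= M / (1 - rho).
  elim: N => [|N IH]; first by rewrite P0 divr_ge0 ?subr_ge0 ?ltW.
  rewrite PS; have := ltW (le_lt_trans (ler_norm _) (KM N I)).
  have -> : M / (1 - rho) = M + rho * (M / (1 - rho)) by field; lra.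
  by move=> KN; apply: lerD => //; apply: ler_wpM2l.
have cP : cvgn P by apply: nondecreasing_is_cvgn => //; exists (M / (1 - rho)) => _ [n _ <-].
have Pl : P @ \oo --> limn P := cP.
have PSk : P @ \oo --> k + rho * limn P.
  rewrite -cvg_shiftS.
  have -> : [sequence P n.+1]_n = (fun N => K N + rho * P N) by apply/funext => N; rewrite /= PS.
  apply: cvgD => //; exact: cvgMl_tmp.
have fixl : limn P = k + rho * limn P := cvg_lim (@Rhausdorff R) PSk.
suff -> : k / (1 - rho) = limn P by [].
have r1' : 1 - rho != 0 by rewrite subr_eq0 eq_sym lt_eqF.
by apply: (mulIf r1'); rewrite divfK // mulrBr mulr1 {1}fixl; ring.
Qed.

Lemma cvg_wsum (I : finType) (P : pred I) (c : I -> R) (u : I -> R ^nat) (l : I -> R) :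
  (forall x, P x -> u x @ \oo --> l x) ->
  (fun N => \sum_(x | P x) c x * u x N) @ \oo --> \sum_(x | P x) c x * l x.
Proof.
move=> ul; apply: cvg_big => [|x Px]; first exact: add_continuous.
exact: cvgMl_tmp (ul x Px).
Qed.

Lemma series_nd (u : R ^nat) : (forall n, 0 <= u n) -> nondecreasing_seq (series u).
Proof. by move=> u0; apply: nondecreasing_series => n _ _; exact: u0. Qed.

Lemma series0 (u : R ^nat) : series u 0 = 0.
Proof. by rewrite /series /= big_geq. Qed.

End Limits.

Section Stability.
Variables (R : realType) (V : finType) (e : rel V) (alpha : V -> R).
Hypothesis alpha_gt0 : forall i, 0 < alpha i.
Hypothesis stable : forall I : {set V}, indep e I -> asum alpha I < asum alpha (nbhd e I).
Implicit Types (A B : {set V}).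
Local Notation asm := (asum alpha).
Local Notation nb := (nbhd e).
Local Notation addable := (addable e).
Local Notation cont_wt := (cont_wt e alpha).
Local Notation wfac := (wfac e alpha).

Lemma asm_ge0 A : 0 <= asm A.
Proof. by apply: sumr_ge0 => i _; exact: ltW. Qed.

Lemma asm_bounds B : edgeless e B -> B != set0 -> 0 < asm B < asm (nb B).
Proof.
move=> eB B0; rewrite stable ?andbT; last by apply/andP.
case/set0Pn: B0 => x xB; rewrite /asum (bigD1 x) //=.
by rewrite ltr_pwDl ?alpha_gt0 //; apply: sumr_ge0 => i _; exact: ltW.
Qed.

(* Rate of arrivals that leave the letter set A unchanged. *)
Definition rho A := asm A / asm (nb A).

Lemma rho0 : rho set0 = 0.
Proof. by rewrite /rho /asum big_set0 mul0r. Qed.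

Lemma rho_ge0 A : 0 <= rho A.
Proof. by apply: divr_ge0; apply: asm_ge0. Qed.

Lemma rho_lt1 A : edgeless e A -> rho A < 1.
Proof.
move=> eA; have [->|A0] := eqVneq A set0; first by rewrite rho0 ltr01.
have /andP[a0 gap] := asm_bounds eA A0.
by rewrite /rho ltr_pdivrMr ?mul1r // (lt_trans a0 gap).
Qed.

Lemma subr_rho_neq0 A : edgeless e A -> 1 - rho A != 0.
Proof. by move=> eA; rewrite subr_eq0 eq_sym lt_eqF ?rho_lt1. Qed.

(* The T- and E-factors expressed through rho; this is where the stability
   condition makes the denominators of T and E nonzero. *)
Lemma efac_rho B : edgeless e B -> B != set0 -> efac e alpha B = (1 - rho B)^-1.
Proof.
move=> eB B0; have /andP[a0 gap] := asm_bounds eB B0.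
rewrite /efac /rho; field; apply/andP; split; apply: lt0r_neq0; lra.
Qed.

Lemma tfac_rho x A : edgeless e (x |: A) ->
  tfac e alpha x (x |: A) = wfac x (x |: A) / (1 - rho (x |: A)).
Proof.
move=> eB; have /andP[a0 gap] := asm_bounds eB (setU1_neq0 x A).
rewrite /tfac /wfac /rho; field; apply/andP; split; apply: lt0r_neq0; lra.
Qed.

Lemma wfac_ge0 x B : 0 <= wfac x B.
Proof. by apply: divr_ge0; [exact: ltW | exact: asm_ge0]. Qed.

Lemma cont_wt_ge0 A q : 0 <= cont_wt A q.
Proof. by apply: sumr_ge0 => w _; apply: prodr_ge0 => k _; exact: wfac_ge0. Qed.

(* The first-letter recursion, separating the letters already present. *)
Lemma cont_wt_split A q : edgeless e A -> cont_wt A q.+1 =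
  rho A * cont_wt A q + \sum_(x | addable A x) wfac x (x |: A) * cont_wt (x |: A) q.
Proof.
move=> eA; rewrite cont_wtS (bigID (mem A)) /=; congr (_ + _); last first.
  by apply: eq_bigl => x; rewrite /addable andbC.
rewrite /rho /asum -mulrA mulr_suml; apply: eq_big => [x|x /andP[_ xA]].
  by case xA: (x \in A); rewrite ?andbF // andbT (setU1_id xA).
by rewrite /wfac (setU1_id xA) mulrA.
Qed.

Lemma qcont_wt_split A q : edgeless e A ->
  q.+1%:R * cont_wt A q.+1 = rho A * (q%:R * cont_wt A q) + (rho A * cont_wt A q +
    \sum_(x | addable A x) wfac x (x |: A) * (q%:R * cont_wt (x |: A) q + cont_wt (x |: A) q)).
Proof.
move=> eA; rewrite cont_wt_split //.
under [in RHS]eq_bigr => x _ do rewrite mulrDr mulrCA.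
by rewrite big_split /= -mulr_sumr -natr1; ring.
Qed.

Lemma series_cont_wt_rec A N : edgeless e A -> series (cont_wt A) N.+1 =
  (1 + \sum_(x | addable A x) wfac x (x |: A) * series (cont_wt (x |: A)) N)
  + rho A * series (cont_wt A) N.
Proof.
move=> eA; rewrite /series /= big_nat_recl // cont_wt0 //.
under eq_bigr => q _ do rewrite cont_wt_split //.
rewrite big_split /= -mulr_sumr exchange_big /=.
under [in RHS]eq_bigr => x _ do rewrite mulr_sumr.
ring.
Qed.

Lemma series_qcont_wt_rec A N : edgeless e A ->
  series (fun q => q%:R * cont_wt A q) N.+1 =
  (rho A * series (cont_wt A) N +
   \sum_(x | addable A x) wfac x (x |: A) *
      (series (fun q => q%:R * cont_wt (x |: A) q) N + series (cont_wt (x |: A)) N))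
  + rho A * series (fun q => q%:R * cont_wt A q) N.
Proof.
move=> eA; rewrite /series /= big_nat_recl // mul0r add0r.
under eq_bigr => q _ do rewrite qcont_wt_split //.
rewrite !big_split /= -!mulr_sumr exchange_big /=.
under [X in _ + (_ + X) = _]eq_bigr => x _ do rewrite -mulr_sumr big_split.
ring.
Qed.

Definition Zlim A := Tall e alpha A / (1 - rho A).
Definition Slim A := (Eall e alpha A + rho A * Zlim A) / (1 - rho A).

Lemma cvg_Zlim A : edgeless e A ->
  (forall x, addable A x -> series (cont_wt (x |: A)) @ \oo --> Zlim (x |: A)) ->
  series (cont_wt A) @ \oo --> Zlim A.
Proof.
move=> eA IH; rewrite [Zlim A]/Zlim.
have -> : Tall e alpha A = 1 + \sum_(x | addable A x) wfac x (x |: A) * Zlim (x |: A).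
  rewrite TallS //; congr (_ + _); apply: eq_bigr => x /andP[_ ex].
  by rewrite tfac_rho // /Zlim mulrAC mulrA.
apply: cvg_affine_rec.
- by apply: series_nd => q; exact: cont_wt_ge0.
- exact: series0.
- by move=> N; exact: series_cont_wt_rec.
- by apply: cvgD; [exact: cvg_cst | exact: cvg_wsum].
- exact: rho_ge0.
- exact: rho_lt1.
Qed.

Lemma cvg_Slim A : edgeless e A -> series (cont_wt A) @ \oo --> Zlim A ->
  (forall x, addable A x ->
     series (cont_wt (x |: A)) @ \oo --> Zlim (x |: A) /\
     series (fun q => q%:R * cont_wt (x |: A) q) @ \oo --> Slim (x |: A)) ->
  series (fun q => q%:R * cont_wt A q) @ \oo --> Slim A.
Proof.
move=> eA ZA IH; rewrite [Slim A]/Slim.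
have -> : Eall e alpha A + rho A * Zlim A = rho A * Zlim A +
    \sum_(x | addable A x) wfac x (x |: A) * (Slim (x |: A) + Zlim (x |: A)).
  rewrite EallS addrC; congr (_ + _); apply: eq_bigr => x /andP[_ ex].
  rewrite tfac_rho // efac_rho ?setU1_neq0 // /Slim /Zlim.
  by field; rewrite subr_rho_neq0.
apply: cvg_affine_rec.
- by apply: series_nd => q; apply: mulr_ge0; [exact: ler0n | exact: cont_wt_ge0].
- exact: series0.
- by move=> N; exact: series_qcont_wt_rec.
- apply: cvgD; first exact: cvgMl_tmp.
  by apply: cvg_wsum => x /IH[Zx Sx]; exact: cvgD.
- exact: rho_ge0.
- exact: rho_lt1.
Qed.

Lemma card_setC_addable A x : x \notin A -> (#|~: (x |: A)| < #|~: A|)%N.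
Proof.
move=> xA; have := cardsC A; have := cardsC (x |: A); have := cardsU1 x A.
rewrite xA /=; lia.
Qed.

Lemma cvg_limits A : edgeless e A ->
  series (cont_wt A) @ \oo --> Zlim A /\
  series (fun q => q%:R * cont_wt A q) @ \oo --> Slim A.
Proof.
move: {2}#|~: A| (erefl #|~: A|) => n; elim/ltn_ind: n A => n IH A cA eA.
have IHx x : addable A x ->
    series (cont_wt (x |: A)) @ \oo --> Zlim (x |: A) /\
    series (fun q => q%:R * cont_wt (x |: A) q) @ \oo --> Slim (x |: A).
  case/andP=> xA ex; apply: (IH #|~: (x |: A)|) => //.
  by rewrite -cA; exact: card_setC_addable.
have ZA := cvg_Zlim eA (fun x ax => (IHx x ax).1).
by split => //; exact: cvg_Slim.
Qed.

End Stability.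

Theorem mainTheorem5 (R : realType) (V : finType) (e : rel V) (alpha : V -> R) :
  irreflexive e -> symmetric e -> (forall x y : V, connect e x y) ->
  (forall i, 0 < alpha i) -> \sum_(i : V) alpha i = 1 ->
  (forall I : {set V}, indep e I -> asum alpha I < asum alpha (nbhd e I)) ->
  exists Z S : R,
    series (wsum e alpha) @ \oo --> Z /\
    series (fun q => q%:R * wsum e alpha q) @ \oo --> S /\
    S / Z = (1 + \sum_(I : {set V} | indep e I) TI e alpha I)^-1 *
            (\sum_(I : {set V} | indep e I) EI e alpha I).
Proof.
move=> _ _ _ alpha_gt0 _ stable.
have [cvgZ cvgS] := cvg_limits alpha_gt0 stable (edgeless0 e).
exists (Zlim e alpha set0), (Slim e alpha set0).
have -> : wsum e alpha = cont_wt e alpha set0 by apply: funext => q; exact: wsum_cont_wt.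
do 2!split => //.
by rewrite /Slim /Zlim rho0 subr0 !divr1 mul0r addr0 Tall0 Eall0 mulrC.
Qed.
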